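(* Let $K\ge 1$ and $1\le K^{*}\le K$ be integers. Let $\alpha_1,\dots,\alpha_K$ be independent random variables with $\alpha_k\sim\mathrm{Bernoulli}(p_k)$, $p_k\in(0,1)$ for $k=1,\dots,K$, and write $\boldsymbol{\alpha}=(\alpha_1,\dots,\alpha_K)$. Let $R\in\{0,1\}$ be a response generated from the DINA model for an item whose required attributes are exactly the first $K^{*}$ attributes (i.e. its $Q$-matrix row is $\mathbf{q}=(1,\dots,1,0,\dots,0)$ with $K^{*}$ ones): that is, with ideal response $\xi=\prod_{k=1}^{K^{*}}\alpha_k$, $$P(R=1\mid\boldsymbol{\alpha})=\begin{cases}1-s,&\xi=1,\\ g,&\xi=0,\end{cases}$$ where the slipping parameter $s$ and guessing parameter $g$ satisfy $1-s>g$. Then the mis-specified linear additive model of $R$ regressed on $(\alpha_1,\dots,\alpha_K)$ has mean function $\mathbb{E}^{*}[R\mid\boldsymbol{\alpha}]=\beta_0+\beta_1\alpha_1+\dots+\beta_K\alpha_K$ with $\beta_l\neq 0$ for $l=1,\dots,K^{*}$ and $\beta_k=0$ for $k=K^{*}+1,\dots,K$.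
   Context: The mis-specified linear additive model's mean function $\mathbb{E}^{*}[R\mid\boldsymbol{\alpha}]$ denotes the population linear regression (least squares) mean function of $R$ on $\alpha_1,\dots,\alpha_K$ with an intercept, i.e. $\beta_0+\sum_{k=1}^K\beta_k\alpha_k$ where $(\beta_0,\dots,\beta_K)$ minimize $\mathbb{E}\big[(R-\beta_0-\sum_{k=1}^K\beta_k\alpha_k)^2\big]$ under the joint distribution of $(\boldsymbol{\alpha},R)$ described. *)

From HB Require Import structures.
From mathcomp Require Import all_boot all_order all_algebra.
From mathcomp Require Import reals.
Set Implicit Arguments. Unset Strict Implicit. Unset Printing Implicit Defensive.
Import Order.TTheory GRing.Theory Num.Theory.
Local Open Scope ring_scope.

Section DINA.
Variables (R : realType) (K Kstar : nat).

Definition profile := {ffun 'I_K -> bool}.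

Definition alpha_prob (p : 'I_K -> R) (a : profile) : R :=
  \prod_(k < K) (if a k then p k else 1 - p k).

Definition ideal_resp (a : profile) : bool :=
  [forall k : 'I_K, (k < Kstar)%N ==> a k].

Definition dina_p1 (s g : R) (a : profile) : R :=
  if ideal_resp a then 1 - s else g.

Definition joint_pmf (p : 'I_K -> R) (s g : R) (a : profile) (r : bool) : R :=
  alpha_prob p a * (if r then dina_p1 s g a else 1 - dina_p1 s g a).

Definition lin_pred (b0 : R) (b : 'I_K -> R) (a : profile) : R :=
  b0 + \sum_(k < K) b k * (a k)%:R.

Definition sq_loss (p : 'I_K -> R) (s g : R) (b0 : R) (b : 'I_K -> R) : R :=
  \sum_(a : profile) \sum_(r : bool)
     joint_pmf p s g a r * ((r%:R : R) - lin_pred b0 b a) ^+ 2.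

Definition is_pop_linreg (p : 'I_K -> R) (s g : R) (b0 : R) (b : 'I_K -> R) : Prop :=
  forall (c0 : R) (c : 'I_K -> R), sq_loss p s g b0 b <= sq_loss p s g c0 c.

End DINA.

From HB Require Import structures.
From mathcomp Require Import all_boot all_order all_algebra.
From mathcomp Require Import reals.
From mathcomp Require Import ring.

(** Write [m] for the DINA success probability, which equals [g + (1 - s - g) xi].
    The squared loss splits as [E[m (1 - m)] + E[(m - L)^2]], so a linear
    predictor [L] is a least-squares fit iff it is the orthogonal projection
    of [m] on [span(1, alpha_1, ..., alpha_K)] in [L^2] of the Bernoulli
    product law.  Since [xi] is the monomial [alpha_1 ... alpha_Kstar] and the
    attributes are independent, [E[xi alpha_k] = P] for [k < Kstar] and
    [P p_k] otherwise (with [P = p_1 ... p_Kstar]), so the normal equations are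
    solved by [beta_k = (1 - s - g) P / p_k] for [k < Kstar] and [beta_k = 0]
    otherwise.  All profiles have positive probability, so the projection is
    unique as a function of [alpha], and so are its coefficients. *)

Set Implicit Arguments.
Unset Strict Implicit.
Unset Printing Implicit Defensive.

Import Order.TTheory GRing.Theory Num.Theory.
Local Open Scope ring_scope.

Section WeightedExpectation.
Variables (R : realDomainType) (T : finType) (w : T -> R).

Definition expect (f : T -> R) : R := \sum_x w x * f x.

Lemma eq_expect f h : f =1 h -> expect f = expect h.
Proof. by move=> fh; apply: eq_bigr => x _; rewrite fh. Qed.

Lemma expectD f h : expect (fun x => f x + h x) = expect f + expect h.
Proof. by rewrite -big_split; apply: eq_bigr => x _; rewrite mulrDr. Qed.

Lemma expectZ c f : expect (fun x => c * f x) = c * expect f.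
Proof. by rewrite big_distrr; apply: eq_bigr => x _; rewrite mulrCA. Qed.

Lemma expectB f h : expect (fun x => f x - h x) = expect f - expect h.
Proof. by rewrite -sumrB; apply: eq_bigr => x _; rewrite mulrBr. Qed.

Lemma expect_sum n (F : 'I_n -> T -> R) :
  expect (fun x => \sum_(i < n) F i x) = \sum_(i < n) expect (F i).
Proof. by rewrite exchange_big; apply: eq_bigr => x _; rewrite big_distrr. Qed.

Lemma expect_sqr_ge0 f : (forall x, 0 <= w x) -> 0 <= expect (fun x => f x ^+ 2).
Proof. by move=> w_ge0; apply: sumr_ge0 => x _; rewrite mulr_ge0 ?sqr_ge0 ?w_ge0. Qed.

Lemma expect_sqr_eq0 f :
  (forall x, 0 < w x) -> expect (fun x => f x ^+ 2) = 0 -> forall x, f x = 0.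
Proof.
move=> w_gt0 /eqP; rewrite psumr_eq0; last first.
  by move=> x _; rewrite mulr_ge0 ?sqr_ge0 ?ltW.
move=> /allP f0 x; have /= := f0 x (mem_index_enum x).
by rewrite mulf_eq0 gt_eqF //= sqrf_eq0 => /eqP.
Qed.

Lemma expect_pythagoras y f h :
  expect (fun x => (y x - f x) * (f x - h x)) = 0 ->
  expect (fun x => (y x - h x) ^+ 2) =
    expect (fun x => (y x - f x) ^+ 2) + expect (fun x => (f x - h x) ^+ 2).
Proof.
move=> orth.
have -> : expect (fun x => (y x - h x) ^+ 2) =
    expect (fun x => ((y x - f x) ^+ 2 + (f x - h x) ^+ 2)
                     + 2 * ((y x - f x) * (f x - h x))).
  by apply: eq_expect => x; ring.
by rewrite expectD expectZ orth mulr0 addr0 expectD.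
Qed.

End WeightedExpectation.

Arguments eq_expect {R T w f h}.

Section LinearPredictor.
Variables (R : realType) (K : nat).

Lemma lin_predB (b0 c0 : R) (b c : 'I_K -> R) (a : profile K) :
  lin_pred b0 b a - lin_pred c0 c a = lin_pred (b0 - c0) (fun k => b k - c k) a.
Proof.
rewrite /lin_pred opprD addrACA -sumrB; congr (_ + _).
by apply: eq_bigr => k _; rewrite mulrBl.
Qed.

Lemma lin_pred_coef_inj (b0 c0 : R) (b c : 'I_K -> R) :
  lin_pred b0 b =1 lin_pred c0 c -> b =1 c.
Proof.
have lin_pred_at (d0 : R) d (k : 'I_K) : lin_pred d0 d [ffun j => j == k] = d0 + d k.
  rewrite /lin_pred (bigD1 k) //= ffunE eqxx mulr1 big1 ?addr0 // => j /negbTE jk.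
  by rewrite ffunE jk mulr0.
have lin_pred0 (d0 : R) d : lin_pred d0 d ([ffun => false] : profile K) = d0.
  by rewrite /lin_pred big1 ?addr0 // => j _; rewrite ffunE mulr0.
move=> bc k; have := bc [ffun j => j == k].
by rewrite !lin_pred_at -(lin_pred0 b0 b) -(lin_pred0 c0 c) bc => /addrI.
Qed.

Lemma expect_mul_lin_pred_eq0 (w e : profile K -> R) (c0 : R) (c : 'I_K -> R) :
  expect w e = 0 -> (forall k, expect w (fun a => e a * (a k)%:R) = 0) ->
  expect w (fun a => e a * lin_pred c0 c a) = 0.
Proof.
move=> e0 ek0; rewrite (@eq_expect _ _ _ _
  (fun a => c0 * e a + \sum_(k < K) c k * (e a * (a k)%:R))); last first.
  move=> a; rewrite /lin_pred mulrDr mulrC big_distrr; congr (_ + _).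
  by apply: eq_bigr => k _ /=; rewrite mulrCA.
rewrite expectD expectZ expect_sum e0 mulr0 add0r big1 // => k _.
by rewrite expectZ ek0 mulr0.
Qed.

End LinearPredictor.

Section BernoulliProduct.
Variables (R : realType) (K : nat) (p : 'I_K -> R).
Local Notation E := (expect (alpha_prob p)).

Definition monomial (S : pred 'I_K) (a : profile K) : R := \prod_(j | S j) (a j)%:R.

Lemma expect_monomial S : E (monomial S) = \prod_(j | S j) p j.
Proof.
pose F j (b : bool) := (if b then p j else 1 - p j) * (if S j then b%:R else 1).
rewrite /expect (eq_bigr (fun a : profile K => \prod_(j < K) F j (a j))); last first.
  by move=> a _; rewrite /monomial big_mkcond -big_split.
rewrite -bigA_distr_bigA /F [RHS]big_mkcond; apply: eq_bigr => j _; rewrite big_bool /=.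
by case: (S j); rewrite ?mulr1 ?mulr0 ?addr0 // subrKC.
Qed.

Lemma monomialU S S' (a : profile K) :
  monomial S a * monomial S' a = monomial (predU S S') a.
Proof.
rewrite /monomial (big_mkcond S) (big_mkcond S') (big_mkcond (predU S S')).
rewrite -big_split; apply: eq_bigr => j _ /=.
by case: (S j); case: (S' j); case: (a j); rewrite /= ?mulr1 ?mul1r ?mulr0.
Qed.

Lemma monomial1 (k : 'I_K) (a : profile K) : (a k)%:R = monomial (pred1 k) a.
Proof. by rewrite /monomial big_pred1_eq. Qed.

Lemma expect_cst c : E (fun=> c) = c.
Proof.
have /eq_expect-> : (fun=> c) =1 (fun a => c * monomial pred0 a).
  by move=> a; rewrite /monomial big_pred0_eq mulr1.
by rewrite expectZ expect_monomial big_pred0_eq mulr1.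
Qed.

Lemma expect_attr k : E (fun a => (a k)%:R) = p k.
Proof. by rewrite (eq_expect (monomial1 k)) expect_monomial big_pred1_eq. Qed.

Lemma expect_attr_mul j k :
  E (fun a => (a j)%:R * (a k)%:R) = if j == k then p k else p j * p k.
Proof.
rewrite (@eq_expect _ _ _ _ (monomial (predU (pred1 j) (pred1 k)))); last first.
  by move=> a; rewrite monomial1 [X in _ * X]monomial1 monomialU.
rewrite expect_monomial; case: eqP => [->|/eqP jk].
  by rewrite (eq_bigl (pred1 k)) ?big_pred1_eq // => i /=; rewrite orbb.
rewrite (bigD1 j) /=; last by rewrite eqxx.
rewrite (bigD1 k) /=; last by rewrite eqxx orbT eq_sym.
by rewrite big1 ?mulr1 // => i /andP[/andP[/orP[] /eqP-> //]]; rewrite eqxx.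
Qed.

Lemma expect_lin_pred (b0 : R) (b : 'I_K -> R) :
  E (lin_pred b0 b) = b0 + \sum_(k < K) b k * p k.
Proof.
rewrite expectD expect_cst expect_sum; congr (_ + _).
by apply: eq_bigr => k _; rewrite expectZ expect_attr.
Qed.

(* Independence: only the [alpha_k^2 = alpha_k] term differs from [E[L] E[alpha_k]]. *)
Lemma expect_lin_pred_mul_attr (b0 : R) (b : 'I_K -> R) (k : 'I_K) :
  E (fun a => lin_pred b0 b a * (a k)%:R) =
    E (lin_pred b0 b) * p k + b k * (p k * (1 - p k)).
Proof.
rewrite (@eq_expect _ _ _ _ (fun a : profile K => b0 * (a k)%:R +
    \sum_(j < K) b j * ((a j)%:R * (a k)%:R))); last first.
  move=> a; rewrite /lin_pred mulrDl big_distrl; congr (_ + _).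
  by apply: eq_bigr => j _; rewrite mulrA.
rewrite expectD expectZ expect_attr expect_sum expect_lin_pred.
under eq_bigr => j _ do rewrite expectZ expect_attr_mul.
rewrite (bigD1 k) //= eqxx [in RHS](bigD1 k) //= mulrDl mulrDl big_distrl /=.
rewrite (eq_bigr (fun j => b j * p j * p k)) => [|j /negbTE ->]; last by rewrite mulrA.
ring.
Qed.

Lemma alpha_prob_gt0 : (forall k, 0 < p k < 1) -> forall a, 0 < alpha_prob p a.
Proof.
move=> p01 a; apply: prodr_gt0 => k _; have /andP[pk_gt0 pk_lt1] := p01 k.
by case: (a k); rewrite ?subr_gt0.
Qed.

End BernoulliProduct.

Arguments monomial {R K} S a.

Section DinaRegression.
Variables (R : realType) (K Kstar : nat) (p : 'I_K -> R) (s g : R).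
Hypothesis p01 : forall k, 0 < p k < 1.
Local Notation E := (expect (alpha_prob p)).
Local Notation m := (dina_p1 Kstar s g).

Definition mastery_prob : R := \prod_(j < K | (j < Kstar)%N) p j.

Definition dina_slope (k : 'I_K) : R :=
  if (k < Kstar)%N then (1 - s - g) * mastery_prob / p k else 0.

Definition dina_intercept : R :=
  g + (1 - s - g) * mastery_prob - \sum_(k < K) dina_slope k * p k.

Local Notation L := (lin_pred dina_intercept dina_slope).

Lemma ideal_resp_monomial (a : profile K) :
  (ideal_resp Kstar a)%:R = monomial (fun j : 'I_K => (j < Kstar)%N) a :> R.
Proof.
rewrite /ideal_resp /monomial.
case: (boolP [forall _, _]) => [/forallP all_a | /forallPn [j]].
  by rewrite big1 // => j /(implyP (all_a j)) ->.
by rewrite negb_imply => /andP[jKs /negbTE aj]; rewrite (bigD1 j) //= aj mul0r.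
Qed.

Lemma dina_p1E (a : profile K) : m a = g + (1 - s - g) * (ideal_resp Kstar a)%:R.
Proof. by rewrite /dina_p1; case: ideal_resp => /=; ring. Qed.

Lemma expect_ideal_resp : E (fun a => (ideal_resp Kstar a)%:R) = mastery_prob.
Proof. by rewrite (eq_expect ideal_resp_monomial) expect_monomial. Qed.

Lemma expect_ideal_resp_mul_attr (k : 'I_K) :
  E (fun a => (ideal_resp Kstar a)%:R * (a k)%:R) =
    if (k < Kstar)%N then mastery_prob else mastery_prob * p k.
Proof.
rewrite (@eq_expect _ _ _ _
  (monomial (predU (fun j : 'I_K => (j < Kstar)%N) (pred1 k)))); last first.
  by move=> a; rewrite ideal_resp_monomial monomial1 monomialU.
rewrite expect_monomial /mastery_prob; case: ifP => kKs.
  by apply: eq_bigl => j /=; case: eqP => [->|]; rewrite ?kKs ?orbT ?orbF.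
rewrite (bigD1 k) /= ?eqxx ?orbT // mulrC; congr (_ * _).
by apply: eq_bigl => j /=; case: eqP => [->|]; rewrite ?kKs ?andbF ?andbT ?orbF.
Qed.

Lemma expect_dina_residual : E (fun a => m a - L a) = 0.
Proof.
rewrite expectB (eq_expect dina_p1E) expectD expect_cst expectZ.
by rewrite expect_ideal_resp expect_lin_pred /dina_intercept; ring.
Qed.

Lemma expect_dina_residual_mul_attr (k : 'I_K) :
  E (fun a => (m a - L a) * (a k)%:R) = 0.
Proof.
rewrite (@eq_expect _ _ _ _ (fun a : profile K => g * (a k)%:R +
    (1 - s - g) * ((ideal_resp Kstar a)%:R * (a k)%:R) - L a * (a k)%:R)); last first.
  by move=> a; rewrite dina_p1E mulrBl mulrDl mulrA.
rewrite expectB expectD !expectZ expect_attr expect_ideal_resp_mul_attr.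
rewrite expect_lin_pred_mul_attr expect_lin_pred /dina_intercept.
have /andP[pk_gt0 _] := p01 k.
rewrite /dina_slope; case: ifP => _; last by ring.
by field; rewrite gt_eqF.
Qed.

Lemma sq_lossE (b0 : R) (b : 'I_K -> R) :
  sq_loss Kstar p s g b0 b =
    E (fun a => m a * (1 - m a)) + E (fun a => (m a - lin_pred b0 b a) ^+ 2).
Proof.
rewrite /sq_loss -expectD; apply: eq_bigr => a _.
by rewrite big_bool /joint_pmf /=; ring.
Qed.

Lemma sq_loss_pythagoras (c0 : R) (c : 'I_K -> R) :
  sq_loss Kstar p s g c0 c =
    sq_loss Kstar p s g dina_intercept dina_slope +
    E (fun a => (L a - lin_pred c0 c a) ^+ 2).
Proof.
have orth : E (fun a => (m a - L a) * (L a - lin_pred c0 c a)) = 0.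
  under eq_expect => a do rewrite lin_predB.
  exact: expect_mul_lin_pred_eq0 expect_dina_residual expect_dina_residual_mul_attr.
by rewrite !sq_lossE (expect_pythagoras orth) addrA.
Qed.

Lemma dina_pop_linreg : is_pop_linreg Kstar p s g dina_intercept dina_slope.
Proof.
move=> c0 c; rewrite [leRHS]sq_loss_pythagoras lerDl.
by apply: expect_sqr_ge0 => a; apply/ltW/alpha_prob_gt0.
Qed.

Lemma pop_linreg_slopeE (b0 : R) (b : 'I_K -> R) :
  is_pop_linreg Kstar p s g b0 b -> b =1 dina_slope.
Proof.
move=> opt; apply: (@lin_pred_coef_inj _ _ b0 dina_intercept) => a.
have gap : E (fun a => (L a - lin_pred b0 b a) ^+ 2) = 0.
  apply/eqP; rewrite eq_le expect_sqr_ge0 ?andbT => [|a']; last first.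
    exact/ltW/alpha_prob_gt0.
  by rewrite -(lerD2l (sq_loss Kstar p s g dina_intercept dina_slope)) addr0
    -sq_loss_pythagoras opt.
exact/esym/subr0_eq/(expect_sqr_eq0 (alpha_prob_gt0 p01) gap).
Qed.

Lemma dina_slope_neq0 (k : 'I_K) : g < 1 - s -> (k < Kstar)%N -> dina_slope k != 0.
Proof.
move=> sg kKs; have /andP[pk_gt0 _] := p01 k.
have P_gt0 : 0 < mastery_prob by apply: prodr_gt0 => j _; case/andP: (p01 j).
by rewrite /dina_slope kKs !mulf_neq0 ?invr_eq0 ?gt_eqF ?subr_gt0.
Qed.

End DinaRegression.

Theorem proposition1 (R : realType) (K Kstar : nat)
  (hK : (1 <= K)%N) (hKs1 : (1 <= Kstar)%N) (hKsK : (Kstar <= K)%N)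
  (p : 'I_K -> R) (hp : forall k, 0 < p k < 1)
  (s g : R) (hs : 0 <= s <= 1) (hg : 0 <= g <= 1) (hsg : g < 1 - s) :
  (exists (b0 : R) (b : 'I_K -> R), is_pop_linreg Kstar p s g b0 b) /\
  (forall (b0 : R) (b : 'I_K -> R), is_pop_linreg Kstar p s g b0 b ->
     (forall l : 'I_K, (l < Kstar)%N -> b l != 0) /\
     (forall k : 'I_K, (Kstar <= k)%N -> b k = 0)).
Proof.
split; first by exists (dina_intercept Kstar p s g), (dina_slope Kstar p s g);
  exact: dina_pop_linreg.
move=> b0 b /(pop_linreg_slopeE hp) bE; split=> k kKs; rewrite bE.
  exact: dina_slope_neq0.
by rewrite /dina_slope ltnNge kKs.
Qed.
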